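(* Let $t_1, t_2 \in \mathsf{Topo}$ and let $f$ be an embedding of $t_1$ inside $t_2$. For every $q \in \mathsf{PIFOTree}(t_1)$, if $\mathsf{pop}(q) = (pkt, q')$, then $\mathsf{pop}(\widehat f(q)) = (pkt, \widehat f(q'))$.
   Context: Fix a set $\mathsf{Pkt}$ of packets and a totally ordered set $\mathsf{Rk}$ of ranks (smaller is more favorable). PIFOs: for a set $S$, a PIFO over $S$ is a finite sequence of pairs $(s,r)\in S\times\mathsf{Rk}$ in insertion order; $\mathsf{PIFO}(S)$ is the set of these. $\mathsf{pop}_{\mathsf{PIFO}}(p)$ is undefined if $p$ is empty; otherwise it removes the entry of minimal rank (earliest-inserted among ties) and returns $(s,p')$, its element and the rest. Topologies: $\mathsf{Topo}$ is the smallest set with $*\in\mathsf{Topo}$ and $\mathsf{Node}(\vec t)\in\mathsf{Topo}$ for $n\in\mathbb{N}$, $\vec t\in\mathsf{Topo}^n$. PIFO trees: $\mathsf{Leaf}(p)\in\mathsf{PIFOTree}( * )$ for $p\in\mathsf{PIFO}(\mathsf{Pkt})$; $\mathsf{Internal}(\vec q,p)\in\mathsf{PIFOTree}(\mathsf{Node}(\vec t))$ whenever $\vec t\in\mathsf{Topo}^n$, $p\in\mathsf{PIFO}(\{1,\dots,n\})$, $\vec q[i]\in\mathsf{PIFOTree}(\vec t[i])$. $\vec q[q'/i]$ replaces the $i$-th entry by $q'$. pop (partial): $\mathsf{pop}(\mathsf{Leaf}(p))=(pkt,\mathsf{Leaf}(p'))$ if $\mathsf{pop}_{\mathsf{PIFO}}(p)=(pkt,p')$;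 $\mathsf{pop}(\mathsf{Internal}(\vec q,p))=(pkt,\mathsf{Internal}(\vec q[q'/i],p'))$ if $\mathsf{pop}_{\mathsf{PIFO}}(p)=(i,p')$ and $\mathsf{pop}(\vec q[i])=(pkt,q')$; undefined otherwise. Addresses: $\mathsf{Addr}(t)\subseteq\mathbb{N}^*$ is the smallest set with $\epsilon\in\mathsf{Addr}(t)$ and $i\cdot\alpha\in\mathsf{Addr}(\mathsf{Node}(\vec t))$ for $1\le i\le n$, $\alpha\in\mathsf{Addr}(\vec t[i])$. Subtrees: $t/\epsilon=t$, $\mathsf{Node}(\vec t)/(i\cdot\alpha)=\vec t[i]/\alpha$. An embedding of $t_1$ in $t_2$ is an injective $f:\mathsf{Addr}(t_1)\to\mathsf{Addr}(t_2)$ with $f(\epsilon)=\epsilon$, $t_2/f(\alpha)=*$ whenever $t_1/\alpha=*$, and $\alpha$ a prefix of $\alpha'$ iff $f(\alpha)$ a prefix of $f(\alpha')$. If $t_1=*$ then $t_2=*$; if $t_1=\mathsf{Node}(\vec t_1)$, the map $f_i$ defined by $f(i\cdot\alpha)=f(i)\cdot f_i(\alpha)$ is an embedding of $t_1/i$ in $t_2/f(i)$. Lifting $\widehat f:\mathsf{PIFOTree}(t_1)\to\mathsf{PIFOTree}(t_2)$, by recursion on $t_1$: if $t_1=*$, $\widehat f(q)=q$. If $t_1=\mathsf{Node}(\vec t_1)$ with $n$ children and $q=\mathsf{Internal}(\vec q,p)$, define for each address $\alpha$ of $t_2$ that is a prefix of some $f(i)$ a tree $\widehat f(q)_\alpha\in\mathsf{PIFOTree}(t_2/\alpha)$,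 from longer to shorter $\alpha$: if $\alpha=f(i)$, $\widehat f(q)_\alpha=\widehat{f_i}(\vec q[i])$; otherwise $t_2/\alpha$ has some $m$ children and $\widehat f(q)_\alpha=\mathsf{Internal}(\vec q_\alpha,p_\alpha)$, where $\vec q_\alpha[j]=\widehat f(q)_{\alpha\cdot j}$ if $\alpha\cdot j$ is a prefix of some $f(i)$ and otherwise $\vec q_\alpha[j]$ is the tree of topology $t_2/(\alpha\cdot j)$ with all PIFOs empty; and $p_\alpha$ is obtained from $p$ by replacing each entry $(i,r)$ by $(j,r)$ where $\alpha\cdot j$ is a prefix of $f(i)$, deleting entries for which no such $j$ exists, keeping the order. Finally $\widehat f(q)=\widehat f(q)_\epsilon$. *)

From mathcomp Require Import all_boot all_order.
Set Implicit Arguments. Unset Strict Implicit. Unset Printing Implicit Defensive.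
Import Order.TTheory.
Local Open Scope order_scope.

Inductive Topo : Type := Star | Node of seq Topo.

(* Subtree t/alpha (partial); addresses use 1-based child indices. *)
Fixpoint subtopo (t : Topo) (a : seq nat) : option Topo :=
  match a with
  | [::] => Some t
  | i :: b => match t with
              | Star => None
              | Node ts => if (0 < i)%N && (i <= size ts)%N
                           then subtopo (nth Star ts i.-1) b else None
              end
  end.

Definition is_addr (t : Topo) (a : seq nat) : Prop := subtopo t a <> None.

(* Embedding of t1 in t2 (f is given on all of N*, only its values on Addr(t1) matter). *)
Record embedding (t1 t2 : Topo) (f : seq nat -> seq nat) : Prop := {
  emb_into   : forall a, is_addr t1 a -> is_addr t2 (f a);
  emb_inj    : forall a b, is_addr t1 a -> is_addr t1 b -> f a = f b -> a = b;
  emb_root   : f [::] = [::];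
  emb_leaf   : forall a, subtopo t1 a = Some Star -> subtopo t2 (f a) = Some Star;
  emb_prefix : forall a b, is_addr t1 a -> is_addr t1 b ->
                 prefix a b = prefix (f a) (f b)
}.

Section PIFO.
Variable Pkt : Type.
Variables (d : Order.disp_t) (Rk : orderType d).

(* A PIFO over S: a sequence of (element, rank) in insertion order.
   popE returns the entry of minimal rank (earliest among ties) and the rest. *)
Fixpoint popE (S : Type) (p : seq (S * Rk)) : option ((S * Rk) * seq (S * Rk)) :=
  match p with
  | [::] => None
  | x :: p' => match popE p' with
               | Some (y, p'') => if y.2 < x.2 then Some (y, x :: p'') else Some (x, p')
               | None => Some (x, p')
               end
  end.

Definition pop_PIFO (S : Type) (p : seq (S * Rk)) : option (S * seq (S * Rk)) :=
  match popE p with Some (e, p') => Some (e.1, p') | None => None end.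

(* Untyped PIFO trees; PIFOTree(t) = those q with wt t q. *)
Inductive PTree : Type :=
  | Leaf of seq (Pkt * Rk)
  | Internal of seq PTree & seq (nat * Rk).

Fixpoint wt (t : Topo) (q : PTree) : Prop :=
  match t, q with
  | Star, Leaf _ => True
  | Node ts, Internal qs p =>
      all (fun e => (1 <= e.1 <= size ts)%N) p /\
      (fix wts (ts : seq Topo) (qs : seq PTree) : Prop :=
         match ts, qs with
         | [::], [::] => True
         | t0 :: ts', q0 :: qs' => wt t0 q0 /\ wts ts' qs'
         | _, _ => False
         end) ts qs
  | _, _ => False
  end.

Definition PIFOTree (t : Topo) := {q : PTree | wt t q}.

Fixpoint pop (q : PTree) : option (Pkt * PTree) :=
  match q with
  | Leaf p => match pop_PIFO p with
              | Some (pkt, p') => Some (pkt, Leaf p')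
              | None => None
              end
  | Internal qs p =>
      match pop_PIFO p with
      | Some (i, p') =>
          let fix go (qs : seq PTree) (k : nat) : option (Pkt * seq PTree) :=
            match qs with
            | [::] => None
            | q0 :: qs' =>
                match k with
                | 0 => match pop q0 with
                       | Some (pk, q0') => Some (pk, q0' :: qs')
                       | None => None
                       end
                | k'.+1 => match go qs' k' with
                           | Some (pk, r) => Some (pk, q0 :: r)
                           | None => None
                           end
                end
            end in
          match i with
          | 0 => None
          | i'.+1 => match go qs i' with
                     | Some (pk, qs'') => Some (pk, Internal qs'' p')
                     | None => None
                     end
          end
      | None => None
      end
  end.

Fixpoint empty_tree (t : Topo) : PTree :=
  match t with
  | Star => Leaf [::]
  | Node ts => Internal (map empty_tree ts) [::]
  end.

Definition relabel (F : seq nat -> seq nat) (a : seq nat) (p : seq (nat * Rk))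
  : seq (nat * Rk) :=
  pmap (fun e => let fi := F [:: e.1] in
                 if prefix a fi && (size a < size fi)%N
                 then Some (nth 0%N fi (size a), e.2) else None) p.

Definition below (n : nat) (F : seq nat -> seq nat) (b : seq nat) : bool :=
  has (fun i => prefix b (F [:: i])) (iota 1 n).

(* hat f(q)_alpha, given the already-lifted children lqs (lqs[i-1] = hat f_i (q[i])),
   t = t2/alpha. *)
Fixpoint build (n : nat) (F : seq nat -> seq nat) (lqs : seq PTree)
         (p : seq (nat * Rk)) (t : Topo) (a : seq nat) : PTree :=
  let k := find (fun i => F [:: i] == a) (iota 1 n) in
  if (k < n)%N then nth (Leaf [::]) lqs k
  else match t with
       | Star => Leaf [::]
       | Node ts =>
           Internal
             ((fix go (ts : seq Topo) (j : nat) : seq PTree :=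
                 match ts with
                 | [::] => [::]
                 | tj :: r =>
                     (if below n F (rcons a j)
                      then build n F lqs p tj (rcons a j)
                      else empty_tree tj) :: go r j.+1
                 end) ts 1%N)
             (relabel F a p)
       end.

(* The lifting hat f : PIFOTree(t1) -> PIFOTree(t2); f_i(alpha) is defined by
   f(i.alpha) = f(i).f_i(alpha). *)
Fixpoint lift_tree (t2 : Topo) (F : seq nat -> seq nat) (q : PTree) : PTree :=
  match q with
  | Leaf p => Leaf p
  | Internal qs p =>
      let fix liftall (qs : seq PTree) (i : nat) : seq PTree :=
        match qs with
        | [::] => [::]
        | qi :: r =>
            lift_tree (odflt Star (subtopo t2 (F [:: i])))
                 (fun a => drop (size (F [:: i])) (F (i :: a))) qi
            :: liftall r i.+1
        end in
      build (size qs) F (liftall qs 1%N) p t2 [::]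
  end.

End PIFO.

From mathcomp Require Import all_boot all_order zify.
Set Implicit Arguments. Unset Strict Implicit. Unset Printing Implicit Defensive.
Import Order.TTheory.
Local Open Scope order_scope.

(* Popping [q] pops the minimal entry [(i, r)] of its root PIFO and then the [i]-th
   child. In the lift, each node on the path from the root to [f [:: i]] carries the
   root PIFO of [q] relabelled towards its children, and [(i, r)] survives the
   relabelling exactly at these nodes, where it still has minimal rank and points one
   step further towards [f [:: i]]. So popping the lift descends to [f [:: i]], where
   the lift of the [i]-th child sits and induction applies; off the path [(i, r)] has
   been filtered out, so the pop leaves those PIFOs and subtrees unchanged. *)

Fixpoint all_prop (T : Type) (P : T -> Prop) (s : seq T) : Prop :=
  if s is x :: s' then P x /\ all_prop P s' else True.

Lemma all_prop_nth (T : Type) (P : T -> Prop) (x0 : T) s m :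
  all_prop P s -> (m < size s)%N -> P (nth x0 s m).
Proof. by elim: s m => [//|x s IH] [|m] /= [Px Ps] // lt_m; apply: IH. Qed.

Definition Topo_nested_ind (P : Topo -> Prop) (P_star : P Star)
    (P_node : forall ts, all_prop P ts -> P (Node ts)) : forall t, P t :=
  fix ind t := match t with
  | Star => P_star
  | Node ts => P_node ts ((fix ind_all ts := match ts return all_prop P ts with
                 | [::] => I
                 | t :: ts' => conj (ind t) (ind_all ts')
                 end) ts)
  end.

Lemma subtopo_cat t a b :
  subtopo t (a ++ b) = obind (subtopo^~ b) (subtopo t a).
Proof. by elim: a t => [//|i a IH] [|ts] //=; case: ifP. Qed.

Lemma is_addr_cons ts i a : (0 < i <= size ts)%N ->
  is_addr (Node ts) (i :: a) <-> is_addr (nth Star ts i.-1) a.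
Proof. by rewrite /is_addr /= => ->. Qed.

Definition child_topo (t2 : Topo) (f : seq nat -> seq nat) (i : nat) : Topo :=
  odflt Star (subtopo t2 (f [:: i])).

Definition child_map (f : seq nat -> seq nat) (i : nat) (a : seq nat) : seq nat :=
  drop (size (f [:: i])) (f (i :: a)).

(* 0-based: if [child_index n f a < n] then [f [:: (child_index n f a).+1] = a];
   it is [n] when no child is sent to [a]. *)
Definition child_index (n : nat) (f : seq nat -> seq nat) (a : seq nat) : nat :=
  find (fun k => f [:: k] == a) (iota 1 n).

Section ChildEmbedding.
Variables (ts : seq Topo) (t2 : Topo) (f : seq nat -> seq nat).
Hypothesis f_emb : embedding (Node ts) t2 f.

Lemma is_addr_child i : (0 < i <= size ts)%N -> is_addr (Node ts) [:: i].
Proof. by move=> i_range; apply/(is_addr_cons _ i_range). Qed.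

Lemma emb_child_inj k k' : (0 < k <= size ts)%N -> (0 < k' <= size ts)%N ->
  prefix (f [:: k]) (f [:: k']) -> k = k'.
Proof.
move=> k_range k'_range.
by rewrite -(emb_prefix f_emb (is_addr_child k_range) (is_addr_child k'_range)) /= andbT => /eqP.
Qed.

Variable i : nat.
Hypothesis i_range : (0 < i <= size ts)%N.

Lemma emb_cons a : is_addr (nth Star ts i.-1) a -> f (i :: a) = f [:: i] ++ child_map f i a.
Proof.
move=> /(is_addr_cons _ i_range) a_addr.
have := emb_prefix f_emb (is_addr_child i_range) a_addr.
by rewrite /child_map /= eqxx prefix0s => /esym/prefixP[s ->]; rewrite drop_size_cat.
Qed.

Lemma embedding_child : embedding (nth Star ts i.-1) (child_topo t2 f i) (child_map f i).
Proof.
have := emb_into f_emb (is_addr_child i_range); rewrite /child_topo /is_addr.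
case fi_sub: (subtopo t2 (f [:: i])) => [t2i|//] _ /=.
have sub_child a : is_addr (nth Star ts i.-1) a ->
    subtopo t2i (child_map f i a) = subtopo t2 (f (i :: a)).
  by move=> a_addr; rewrite emb_cons // subtopo_cat fi_sub.
have cons_addr a := (is_addr_cons a i_range).2.
split.
- by move=> a a_addr; rewrite /is_addr sub_child //; apply/(emb_into f_emb)/cons_addr.
- move=> a b a_addr b_addr eq_ab.
  have : f (i :: a) = f (i :: b) by rewrite (emb_cons a_addr) (emb_cons b_addr) eq_ab.
  by move/(emb_inj f_emb (cons_addr _ a_addr) (cons_addr _ b_addr)) => [].
- by rewrite /child_map drop_size.
- move=> a a_leaf; rewrite sub_child; last by rewrite /is_addr a_leaf.
  by apply: (emb_leaf f_emb (a := i :: a)); rewrite /= i_range.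
- move=> a b a_addr b_addr.
  have := emb_prefix f_emb (cons_addr _ a_addr) (cons_addr _ b_addr).
  by rewrite /= eqxx (emb_cons a_addr) (emb_cons b_addr) prefix_catr // eqxx.
Qed.

End ChildEmbedding.

Section PIFO.
Variables (d : Order.disp_t) (Rk : orderType d).

Lemma popE_split (S : Type) (p : seq (S * Rk)) x p' : popE p = Some (x, p') ->
  exists p1 p2, [/\ p = p1 ++ x :: p2, p' = p1 ++ p2,
    all (fun y => x.2 < y.2) p1 & all (fun z => ~~ (z.2 < x.2)) p2].
Proof.
elim: p x p' => [//|x0 p IH] x p' /=.
case popped: (popE p) => [[y p'']|]; last first.
  case=> <- <-; exists [::], p; split=> //.
  by case: p popped {IH} => //= z p; case: (popE p) => [[? ?]|] //; case: ifP.
have [p1 [p2 [-> -> all1 all2]]] := IH _ _ popped.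
case: ifP => lt_y [<- <-].
  by exists (x0 :: p1), p2; rewrite /= lt_y all1 all2.
have le_x0y : x0.2 <= y.2 by rewrite leNgt lt_y.
exists [::], (p1 ++ y :: p2); split=> //=; rewrite all_cat /= lt_y.
apply/andP; split.
  by apply: sub_all all1 => z lt_yz; rewrite -leNgt (le_trans le_x0y) // ltW.
by apply: sub_all all2 => z; rewrite -!leNgt => /(le_trans le_x0y).
Qed.

Lemma popE_cat (S : Type) (p1 p2 : seq (S * Rk)) x :
  all (fun y => x.2 < y.2) p1 -> all (fun z => ~~ (z.2 < x.2)) p2 ->
  popE (p1 ++ x :: p2) = Some (x, p1 ++ p2).
Proof.
elim: p1 => [|y p1 IH] /= => [_ all2|/andP[lt_xy all1] all2]; last by rewrite IH // lt_xy.
case popped: (popE p2) => [[z p'']|] //.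
have [q1 [q2 [eq_p2 _ _ _]]] := popE_split popped.
by move: all2; rewrite eq_p2 all_cat /= => /and3P[_ /negbTE -> _].
Qed.

Section RankPreservingFilterMap.
Variables (S S' : Type) (g : S * Rk -> option (S' * Rk)).
Hypothesis g_rank : forall e e', g e = Some e' -> e'.2 = e.2.

Lemma all_rank_pmap (P : Rk -> bool) s :
  all (fun y => P y.2) s -> all (fun y => P y.2) (pmap g s).
Proof.
elim: s => //= y s IH /andP[Py all_s].
by case gy: (g y) => [e'|] /=; rewrite ?(g_rank gy) ?Py IH.
Qed.

Lemma popE_pmap p x p' e' : popE p = Some (x, p') -> g x = Some e' ->
  popE (pmap g p) = Some (e', pmap g p').
Proof.
move=> /popE_split[p1 [p2 [-> -> all1 all2]]] gx.
rewrite !pmap_cat /= gx /=; apply: popE_cat; rewrite (g_rank gx).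
  exact: (all_rank_pmap (P := fun r => x.2 < r)).
exact: (all_rank_pmap (P := fun r => ~~ (r < x.2))).
Qed.

End RankPreservingFilterMap.

Lemma pmap_popE_dropped (S S' : Type) (g : S * Rk -> option S') p x p' :
  popE p = Some (x, p') -> g x = None -> pmap g p = pmap g p'.
Proof. by move=> /popE_split[p1 [p2 [-> -> _ _]]] gx; rewrite !pmap_cat /= gx. Qed.

Variable F : seq nat -> seq nat.

Lemma relabel_popE a (p : seq (nat * Rk)) i r p' : popE p = Some ((i, r), p') ->
  prefix a (F [:: i]) -> (size a < size (F [:: i]))%N ->
  popE (relabel F a p) = Some ((nth 0%N (F [:: i]) (size a), r), relabel F a p').
Proof.
move=> popped pre_a lt_a; apply: (popE_pmap _ popped); last by rewrite /= pre_a lt_a.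
by move=> e e' /=; case: ifP => // _ [<-].
Qed.

Lemma relabel_popE_off a (p : seq (nat * Rk)) i r p' : popE p = Some ((i, r), p') ->
  ~~ prefix a (F [:: i]) -> relabel F a p = relabel F a p'.
Proof. by move=> popped off_a; apply: pmap_popE_dropped popped _; rewrite /= (negbTE off_a). Qed.

End PIFO.

Section TreeUnfolding.
Variables (Pkt : Type) (d : Order.disp_t) (Rk : orderType d).
Notation PT := (PTree Pkt Rk).

Definition PTree_nested_ind (P : PT -> Prop) (P_leaf : forall p, P (Leaf p))
    (P_internal : forall qs p, all_prop P qs -> P (Internal qs p)) : forall q, P q :=
  fix ind q := match q with
  | Leaf p => P_leaf p
  | Internal qs p => P_internal qs p ((fix ind_all qs := match qs return all_prop P qs with
                       | [::] => I
                       | q :: qs' => conj (ind q) (ind_all qs')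
                       end) qs)
  end.

Fixpoint wt_children (ts : seq Topo) (qs : seq PT) : Prop :=
  match ts, qs with
  | [::], [::] => True
  | t :: ts', q :: qs' => wt t q /\ wt_children ts' qs'
  | _, _ => False
  end.

Lemma wt_Node ts qs p : wt (Node ts) (Internal qs p) <->
  all (fun e => (1 <= e.1 <= size ts)%N) p /\ wt_children ts qs.
Proof. exact: iff_refl. Qed.

Lemma wt_children_nth ts qs : wt_children ts qs -> size qs = size ts /\
  forall m, (m < size ts)%N -> wt (nth Star ts m) (nth (Leaf [::]) qs m).
Proof.
elim: ts qs => [|t ts IH] [|q qs] //= [wt_q /IH[-> wt_qs]].
by split=> // -[|m] //= /wt_qs.
Qed.

Fixpoint pop_child (qs : seq PT) (k : nat) : option (Pkt * seq PT) :=
  match qs with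
  | [::] => None
  | q :: qs' =>
      match k with
      | 0 => match pop q with Some (pk, q') => Some (pk, q' :: qs') | None => None end
      | k'.+1 => match pop_child qs' k' with Some (pk, r) => Some (pk, q :: r) | None => None end
      end
  end.

Lemma pop_Internal qs p : pop (Internal qs p) =
  match pop_PIFO p with
  | Some (i.+1, p') =>
      match pop_child qs i with Some (pk, qs') => Some (pk, Internal qs' p') | None => None end
  | _ => None
  end.
Proof. by []. Qed.

Lemma pop_childE qs k : pop_child qs k =
  if (k < size qs)%N then
    omap (fun r => (r.1, set_nth (Leaf [::]) qs k r.2)) (pop (nth (Leaf [::]) qs k))
  else None.
Proof.
elim: qs k => [|q qs IH] [|k] //=; first by case: (pop q) => [[]|].
by rewrite IH ltnS; case: ifP => //; case: pop => [[]|].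
Qed.

Fixpoint build_children n F lqs (p : seq (nat * Rk)) (a : seq nat) (ts : seq Topo) (j : nat)
    : seq PT :=
  match ts with
  | [::] => [::]
  | tj :: ts' =>
      (if below n F (rcons a j) then build n F lqs p tj (rcons a j) else empty_tree Pkt Rk tj)
      :: build_children n F lqs p a ts' j.+1
  end.

Lemma buildE n F lqs p t a : build n F lqs p t a =
  if (child_index n F a < n)%N then nth (Leaf [::]) lqs (child_index n F a)
  else match t with
       | Star => Leaf [::]
       | Node ts => Internal (build_children n F lqs p a ts 1) (relabel F a p)
       end.
Proof.
case: t => [//|ts] /=; case: ifP => // _; congr Internal.
by elim: ts 1%N => //= t ts IH j; rewrite IH.
Qed.

Lemma size_build_children n F lqs p a ts j :
  size (build_children n F lqs p a ts j) = size ts.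
Proof. by elim: ts j => //= t ts IH j; rewrite IH. Qed.

Lemma nth_build_children n F lqs p a ts j m : (m < size ts)%N ->
  nth (Leaf [::]) (build_children n F lqs p a ts j) m =
  if below n F (rcons a (j + m)) then build n F lqs p (nth Star ts m) (rcons a (j + m))
  else empty_tree Pkt Rk (nth Star ts m).
Proof.
elim: ts j m => [//|t ts IH] j [|m] /=; first by rewrite addn0.
by move=> lt_m; rewrite IH // addSnnS.
Qed.

Fixpoint lift_children t2 F (qs : seq PT) (i : nat) : seq PT :=
  match qs with
  | [::] => [::]
  | q :: qs' => lift_tree (child_topo t2 F i) (child_map F i) q :: lift_children t2 F qs' i.+1
  end.

Lemma lift_Internal t2 F qs p :
  lift_tree t2 F (Internal qs p) = build (size qs) F (lift_children t2 F qs 1) p t2 [::].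
Proof. by rewrite /=; congr build; elim: qs 1%N => //= q qs IH j; rewrite IH. Qed.

Lemma nth_lift_children t2 F qs i m : (m < size qs)%N ->
  nth (Leaf [::]) (lift_children t2 F qs i) m =
  lift_tree (child_topo t2 F (i + m)) (child_map F (i + m)) (nth (Leaf [::]) qs m).
Proof.
elim: qs i m => [//|q qs IH] i [|m] /=; first by rewrite addn0.
by move=> lt_m; rewrite IH // addSnnS.
Qed.

Lemma lift_children_set_nth t2 F qs i m q : (m < size qs)%N ->
  lift_children t2 F (set_nth (Leaf [::]) qs m q) i =
  set_nth (Leaf [::]) (lift_children t2 F qs i) m
    (lift_tree (child_topo t2 F (i + m)) (child_map F (i + m)) q).
Proof.
elim: qs i m => [//|q' qs IH] i [|m] /=; first by rewrite addn0.
by move=> lt_m; rewrite IH // addSnnS.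
Qed.

End TreeUnfolding.

Section PopAlongPath.
Variables (Pkt : Type) (d : Order.disp_t) (Rk : orderType d).
Variables (n : nat) (F : seq nat -> seq nat) (t2 : Topo) (lqs : seq (PTree Pkt Rk)).
Variables (p p' : seq (nat * Rk)) (i : nat) (r : Rk) (pkt : Pkt) (L' : PTree Pkt Rk).
Hypothesis popped : popE p = Some ((i, r), p').
Hypothesis i_range : (0 < i <= n)%N.
Hypothesis Fi_addr : is_addr t2 (F [:: i]).
Hypothesis F_child_inj : forall k k', (0 < k <= n)%N -> (0 < k' <= n)%N ->
  prefix (F [:: k]) (F [:: k']) -> k = k'.
Hypothesis pop_lifted_child : pop (nth (Leaf [::]) lqs i.-1) = Some (pkt, L').
Let lqs' := set_nth (Leaf [::]) lqs i.-1 L'.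

Lemma child_index_lt a : (child_index n F a < n)%N ->
  F [:: (child_index n F a).+1] = a /\ (0 < (child_index n F a).+1 <= n)%N.
Proof.
move=> lt_k; have has_a : has (fun k => F [:: k] == a) (iota 1 n) by rewrite has_find size_iota.
by have := nth_find 0%N has_a; rewrite nth_iota // add1n => /eqP.
Qed.

Lemma child_index_i : child_index n F (F [:: i]) = i.-1.
Proof.
have : has (fun k => F [:: k] == F [:: i]) (iota 1 n).
  by apply/hasP; exists i; rewrite ?mem_iota.
rewrite has_find size_iota => /child_index_lt[Fk k_range].
by rewrite -[in RHS](F_child_inj k_range i_range) // Fk prefix_refl.
Qed.

Lemma build_off_path t b : ~~ prefix b (F [:: i]) ->
  build n F lqs p t b = build n F lqs' p' t b.
Proof.
have lifted_off a k : ~~ prefix a (F [:: i]) -> F [:: k.+1] = a ->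
    nth (Leaf [::]) lqs k = nth (Leaf [::]) lqs' k.
  move=> off_a Fk; rewrite /lqs' nth_set_nth /=; case: eqP => // k_i.
  by move: off_a; rewrite -Fk k_i prednK ?prefix_refl //; case/andP: i_range.
elim/Topo_nested_ind: t b => [|ts IH] b off_b; rewrite !buildE /=.
all: case: ifP => [/child_index_lt[Fk _]|_] //; first exact: lifted_off off_b Fk.
congr (Internal _ _); last exact: relabel_popE_off popped off_b.
apply: (eq_from_nth (x0 := Leaf [::])); rewrite !size_build_children // => m lt_m.
rewrite !nth_build_children //; case: ifP => // _.
apply: (all_prop_nth Star IH lt_m).
by apply: contra off_b; rewrite -cats1; apply: catl_prefix.
Qed.

Lemma below_prefix b : prefix b (F [:: i]) -> below n F b.
Proof. by move=> pre_b; apply/hasP; exists i => //; rewrite mem_iota; lia. Qed.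

Lemma child_index_strict_prefix a j gm : a ++ j :: gm = F [:: i] ->
  (child_index n F a < n)%N = false.
Proof.
move=> Ea; apply/negbTE/negP => /child_index_lt[Fk k_range].
have := F_child_inj k_range i_range; rewrite Fk -Ea prefix_prefix => /(_ isT) k_i.
by move: Ea; rewrite -Fk k_i => /(congr1 size); rewrite size_cat /=; lia.
Qed.

Lemma build_children_on_path a ts j : (j < size ts)%N -> prefix (rcons a j.+1) (F [:: i]) ->
  build_children n F lqs' p' a ts 1 =
  set_nth (Leaf [::]) (build_children n F lqs p a ts 1) j
    (build n F lqs' p' (nth Star ts j) (rcons a j.+1)).
Proof.
move=> lt_j pre_j; apply: (eq_from_nth (x0 := Leaf [::])).
  by rewrite size_set_nth !size_build_children; apply/esym/maxn_idPr.
rewrite size_build_children => m lt_m.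
rewrite nth_set_nth /= !nth_build_children // add1n.
case: eqP => [->|m_j]; first by rewrite below_prefix.
case: ifP => // _; apply/esym/build_off_path.
apply/negP => pre_m; apply: m_j; move: pre_m pre_j.
by rewrite !prefixE !size_rcons => /eqP-> /eqP/rcons_inj[].
Qed.

Lemma pop_build_on_path gm a t : a ++ gm = F [:: i] -> subtopo t2 a = Some t ->
  pop (build n F lqs p t a) = Some (pkt, build n F lqs' p' t a).
Proof.
elim: gm a t => [|j gm IH] a t.
  rewrite cats0 => -> _; rewrite !buildE child_index_i.
  have lt_i : (i.-1 < n)%N by case/andP: i_range => ? ?; lia.
  by rewrite lt_i /lqs' nth_set_nth /= eqxx.
move=> Ea sub_a; have := Fi_addr; rewrite /is_addr -Ea subtopo_cat sub_a /=.
case: t sub_a => [//|ts] sub_a; case: ifP => // j_range _.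
rewrite !buildE (child_index_strict_prefix Ea) pop_Internal /pop_PIFO.
rewrite (relabel_popE popped); last 2 first.
- by rewrite -Ea prefix_prefix.
- by rewrite -Ea size_cat /=; lia.
rewrite -Ea nth_cat ltnn subnn /=.
case: j Ea j_range => [|j] Ea; first by case/andP.
move=> /andP[_ lt_j].
have pre_j : prefix (rcons a j.+1) (F [:: i]) by rewrite -Ea -cat_rcons prefix_prefix.
have sub_j : subtopo t2 (rcons a j.+1) = Some (nth Star ts j).
  by rewrite -cats1 subtopo_cat sub_a /= lt_j.
rewrite pop_childE size_build_children lt_j nth_build_children // add1n below_prefix //.
by rewrite (IH _ _ _ sub_j) ?cat_rcons //= -build_children_on_path.
Qed.

Lemma pop_build_root :
  pop (build n F lqs p t2 [::]) = Some (pkt, build n F lqs' p' t2 [::]).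
Proof. exact: pop_build_on_path. Qed.

End PopAlongPath.

Theorem lemma5p7 (Pkt : Type) (d : Order.disp_t) (Rk : orderType d)
  (t1 t2 : Topo) (f : seq nat -> seq nat) :
  embedding t1 t2 f ->
  forall (q : PTree Pkt Rk), wt t1 q ->
  forall (pkt : Pkt) (q' : PTree Pkt Rk),
    pop q = Some (pkt, q') ->
    pop (lift_tree t2 f q) = Some (pkt, lift_tree t2 f q').
Proof.
move=> f_emb q; elim/PTree_nested_ind: q t1 t2 f f_emb => [p|qs p IHqs] t1 t2 f f_emb.
  by move=> _ pkt q' /=; case: (pop_PIFO p) => [[pk p']|] // [<- <-].
case: t1 f_emb => [//|ts] f_emb /wt_Node[_ /wt_children_nth[size_qs wt_qs]] pkt q'.
rewrite lift_Internal pop_Internal /pop_PIFO; case popped: (popE p) => [[[[|i] r] p']|] //=.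
rewrite pop_childE; case: ifP => // lt_i.
case pop_qi: (pop _) => [[pk qi']|] //= [<- <-].
have i_range : (0 < i.+1 <= size ts)%N by rewrite -size_qs.
have pop_lifted_qi := all_prop_nth (Leaf [::]) IHqs lt_i _ _ _ (embedding_child f_emb i_range)
  (wt_qs _ (leq_trans lt_i (eq_leq size_qs))) _ _ pop_qi.
rewrite lift_Internal size_set_nth (maxn_idPr lt_i) lift_children_set_nth //.
apply: (pop_build_root popped).
- by rewrite size_qs.
- exact: (emb_into f_emb (is_addr_child i_range)).
- by rewrite size_qs; exact: emb_child_inj f_emb.
- by rewrite nth_lift_children.
Qed.
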